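(* Let $R$ be a right $\sigma$-reversible ring, where $\sigma$ is an endomorphism of $R$ with $\sigma(1)=1$. If $R[[x;\sigma]]$ is a p.p.-ring, then $R$ is a p.p.-ring.
   Context: All rings are associative with identity; $\sigma$ denotes a nonzero, non-identity ring endomorphism of $R$. The skew power series ring $R[[x;\sigma]]$ consists of all formal series $\sum_{i=0}^\infty a_i x^i$ with $a_i\in R$, added termwise and multiplied using distributivity and the rule $xa=\sigma(a)x$ for $a\in R$. $R$ is right $\sigma$-reversible if for all $a,b\in R$, $ab=0$ implies $b\sigma(a)=0$. A ring $S$ is a right (left) p.p.-ring if the right (left) annihilator of every element of $S$ is generated, as a right (left) ideal, by an idempotent; $S$ is a p.p.-ring if it is both a right and a left p.p.-ring. *)

From HB Require Import structures.
From mathcomp Require Import all_boot all_order all_algebra.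
Set Implicit Arguments. Unset Strict Implicit. Unset Printing Implicit Defensive.
Import GRing.Theory.
Local Open Scope ring_scope.

(* Right / left p.p.-ring conditions for an arbitrary multiplication [mul]
   with zero [z]: the right (left) annihilator of every element is the
   principal right (left) ideal generated by an idempotent. *)
Definition right_pp (T : Type) (mul : T -> T -> T) (z : T) : Prop :=
  forall a : T, exists e : T, mul e e = e /\
    (forall b : T, mul a b = z <-> exists c : T, b = mul e c).

Definition left_pp (T : Type) (mul : T -> T -> T) (z : T) : Prop :=
  forall a : T, exists e : T, mul e e = e /\
    (forall b : T, mul b a = z <-> exists c : T, b = mul c e).

Definition pp_ring (T : Type) (mul : T -> T -> T) (z : T) : Prop :=
  right_pp mul z /\ left_pp mul z.

(* Skew power series ring R[[x;sigma]]: a series sum a_i x^i is represented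
   by its coefficient function nat -> R; x a = sigma(a) x. *)
Definition skew_series (R : nzRingType) := nat -> R.

Definition ss_zero (R : nzRingType) : skew_series R := fun _ => 0.

(* (sum a_i x^i)(sum b_j x^j) = sum_n (sum_{i+j=n} a_i sigma^i(b_j)) x^n *)
Definition ss_mul (R : nzRingType) (sigma : R -> R)
    (f g : skew_series R) : skew_series R :=
  fun n => \sum_(i < n.+1) f i * iter i sigma (g (n - i)%N).

Definition right_sigma_reversible (R : nzRingType) (sigma : R -> R) : Prop :=
  forall a b : R, a * b = 0 -> b * sigma a = 0.

From HB Require Import structures.
From mathcomp Require Import all_boot all_order all_algebra.
From Stdlib Require Import FunctionalExtensionality.
Import GRing.Theory.
Local Open Scope ring_scope.

(* R embeds into R[[x;sigma]] as the constant series, and two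
   facts make this embedding transport annihilator conditions back to R:
   the constant term of a product is the product of the constant terms, and
   the product of two constants is the constant of their product.  Given a
   in R, take the idempotent E generating the right annihilator of the
   constant series a; its constant term e is then an idempotent of R
   generating the right annihilator of a: a e = 0 because a E = 0, and if
   a b = 0 then the constant b lies in E R[[x;sigma]], so b = e c where c is
   a constant term.  The left case is symmetric.  These arguments work for
   an arbitrary map sigma. *)

Section ConstantSeries.

Variables (R : nzRingType) (sigma : R -> R).

Definition cst (c : R) : skew_series R :=
  fun n => if n is 0%N then c else 0.

Lemma cst0 : cst 0 = ss_zero R.
Proof. by apply: functional_extensionality => -[]. Qed.

Lemma ss_mul_coef0 (f g : skew_series R) :
  ss_mul sigma f g 0%N = f 0%N * g 0%N.
Proof. by rewrite /ss_mul big_ord1. Qed.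

Lemma ss_mul_cst (a b : R) : ss_mul sigma (cst a) (cst b) = cst (a * b).
Proof.
apply: functional_extensionality => n.
rewrite /ss_mul big_ord_recl subn0 big1 ?addr0 => [|i _]; last by rewrite mul0r.
by case: n => [|n]; rewrite /= ?mulr0.
Qed.

Lemma ss_mul_cst_eq0 {a b : R} :
  a * b = 0 -> ss_mul sigma (cst a) (cst b) = ss_zero R.
Proof. by rewrite ss_mul_cst => ->; rewrite cst0. Qed.

Lemma right_pp_coef :
  right_pp (ss_mul sigma) (ss_zero R) -> right_pp (fun a b : R => a * b) 0.
Proof.
move=> hpp a; have [E [idemE annE]] := hpp (cst a).
have aE : a * E 0%N = 0.
  have aE : ss_mul sigma (cst a) E = ss_zero R by apply/annE; exists E.
  by rewrite -[a]/(cst a 0%N) -ss_mul_coef0 aE.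
exists (E 0%N); split; first by rewrite -ss_mul_coef0 idemE.
move=> b; split=> [ab | [c ->]]; last by rewrite mulrA aE mul0r.
have [C bEC] := (annE (cst b)).1 (ss_mul_cst_eq0 ab).
by exists (C 0%N); rewrite -ss_mul_coef0 -bEC.
Qed.

Lemma left_pp_coef :
  left_pp (ss_mul sigma) (ss_zero R) -> left_pp (fun a b : R => a * b) 0.
Proof.
move=> hpp a; have [E [idemE annE]] := hpp (cst a).
have Ea : E 0%N * a = 0.
  have Ea : ss_mul sigma E (cst a) = ss_zero R by apply/annE; exists E.
  by rewrite -[a]/(cst a 0%N) -ss_mul_coef0 Ea.
exists (E 0%N); split; first by rewrite -ss_mul_coef0 idemE.
move=> b; split=> [ba | [c ->]]; last by rewrite -mulrA Ea mulr0.
have [C bCE] := (annE (cst b)).1 (ss_mul_cst_eq0 ba).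
by exists (C 0%N); rewrite -ss_mul_coef0 -bCE.
Qed.

End ConstantSeries.

Theorem theorem3p4 (R : nzRingType) (sigma : {rmorphism R -> R})
    (sigma_nonzero : exists a : R, sigma a <> 0)
    (sigma_nonid : exists a : R, sigma a <> a)
    (hrev : right_sigma_reversible sigma)
    (hpp : pp_ring (ss_mul sigma) (ss_zero R)) :
  pp_ring (fun a b : R => a * b) 0.
Proof.
case: hpp => [hr hl].
by split; [exact: right_pp_coef hr | exact: left_pp_coef hl].
Qed.
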